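(* Let $G=(U,E)$ be a graph and $\mathcal S\subset 2^U$ a category system such that the greedy category-based routing strategy ROUTING correctly routes messages between all pairs of vertices of $G$. Then $\operatorname{memdim}(\mathcal S)\ge \operatorname{diam}(G)$.
   Context: For $u\in U$ let $\mathrm{cat}(u)=\{C\in\mathcal S: u\in C\}$; the membership dimension is $\operatorname{memdim}(\mathcal S)=\max_{u\in U}|\mathrm{cat}(u)|$. For $s,t\in U$ define $d(s,t)=|\mathrm{cat}(t)\setminus \mathrm{cat}(s)|$. $N(u)$ denotes the set of neighbors of $u$ in $G$, and $\operatorname{diam}(G)$ is the maximum over pairs of vertices of their shortest-path distance in $G$. The strategy ROUTING is: a node $u$ holding a message for destination $w\neq u$ forwards it to a neighbor $v\in N(u)$ with $d(v,w)<d(u,w)$. ROUTING correctly routes messages between all pairs of vertices if for every ordered pair of distinct vertices $u,w$ there is a neighbor $v\in N(u)$ with $d(v,w)<d(u,w)$ (so every message is delivered along a path on which $d(\cdot,w)$ strictly decreases). *)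

From mathcomp Require Import all_boot.
Set Implicit Arguments. Unset Strict Implicit. Unset Printing Implicit Defensive.

Section Defs.
Variable U : finType.

Definition cat (S : {set {set U}}) (u : U) : {set {set U}} :=
  [set C in S | u \in C].

Definition memdim (S : {set {set U}}) : nat := \max_(u : U) #|cat S u|.

Definition cdist (S : {set {set U}}) (s t : U) : nat := #|cat S t :\: cat S s|.

Definition nbhd (e : rel U) (u : U) : {set U} := [set v | e u v].

Fixpoint reach (e : rel U) (u : U) (n : nat) : {set U} :=
  match n with
  | 0 => [set u]
  | n'.+1 => reach e u n' :|: [set y | [exists x in reach e u n', e x y]]
  end.

(* shortest-path distance: least n with w reachable within n steps;
   if w is unreachable we return #|U| (larger than any finite distance,
   which is at most #|U| - 1), standing for "infinity". *)
Definition gdist (e : rel U) (u w : U) : nat :=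
  find (fun n => w \in reach e u n) (iota 0 #|U|).

Definition diam (e : rel U) : nat := \max_(u : U) \max_(w : U) gdist e u w.

Definition routing_correct (e : rel U) (S : {set {set U}}) : Prop :=
  forall u w : U, u != w ->
    exists2 v, v \in nbhd e u & cdist S v w < cdist S u w.

End Defs.

(* Greedy routing towards w strictly decreases d(., w) at every hop, so it reaches w
   from u within d(u, w) <= |cat(w)| <= memdim(S) hops; hence every graph distance is
   bounded by memdim(S). *)
From mathcomp Require Import all_boot.

Set Implicit Arguments.
Unset Strict Implicit.
Unset Printing Implicit Defensive.

Section Reach.
Variables (U : finType) (e : rel U).

Lemma reach0 u : reach e u 0 = [set u].
Proof. by []. Qed.

Lemma in_reachS u k y :
  (y \in reach e u k.+1) = (y \in reach e u k) || [exists x in reach e u k, e x y].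
Proof. by rewrite [reach _ _ _.+1]/= !inE. Qed.

Lemma reachS u k x : x \in reach e u k -> x \in reach e u k.+1.
Proof. by rewrite in_reachS => ->. Qed.

Lemma reach_refl u k : u \in reach e u k.
Proof. by elim: k => [|k IHk]; [rewrite reach0 inE | apply: reachS]. Qed.

Lemma reach_edge u v k x : e u v -> x \in reach e v k -> x \in reach e u k.+1.
Proof.
move=> Euv; elim: k x => [|k IHk] x.
  rewrite reach0 inE => /eqP ->; rewrite in_reachS; apply/orP; right.
  by apply/existsP; exists u; rewrite reach_refl.
rewrite in_reachS => /orP [/IHk/reachS // | /existsP [y /andP [Hy Eyx]]].
by rewrite in_reachS; apply/orP; right; apply/existsP; exists y; rewrite IHk.
Qed.

Lemma gdist_le u w k : w \in reach e u k -> gdist e u w <= k.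
Proof.
move=> Hw; rewrite /gdist; case: (ltnP k #|U|) => Hk.
  rewrite leqNgt; apply/negP => /(before_find 0).
  by rewrite nth_iota // add0n Hw.
by apply: leq_trans (find_size _ _) _; rewrite size_iota.
Qed.

End Reach.

Lemma cdist_le_memdim (U : finType) (S : {set {set U}}) u w : cdist S u w <= memdim S.
Proof. exact: leq_trans (subset_leq_card (subsetDl _ _)) (leq_bigmax w). Qed.

Lemma routing_reach (U : finType) (e : rel U) (S : {set {set U}}) w k u :
  routing_correct e S -> cdist S u w <= k -> w \in reach e u k.
Proof.
move=> RC; elim: k u => [|k IHk] u Hk; have [-> | Huw] := eqVneq u w;
  rewrite ?reach_refl //; case: (RC u w Huw) => v; rewrite inE => Euv Hv.
  by move: Hv; rewrite leqn0 in Hk; rewrite (eqP Hk).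
by apply: (reach_edge Euv); apply: IHk; rewrite -ltnS (leq_trans Hv).
Qed.

Theorem lemma3 (U : finType) (e : rel U) (S : {set {set U}}) :
  symmetric e -> irreflexive e ->
  routing_correct e S ->
  diam e <= memdim S.
Proof.
move=> _ _ RC; apply/bigmax_leqP => u _; apply/bigmax_leqP => w _.
exact: leq_trans (gdist_le (routing_reach RC (leqnn _))) (cdist_le_memdim S u w).
Qed.
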